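(* On every instance with largeness ratio $\theta$, the set $\chi_k$ of winners selected by the Oracle Mechanism satisfies $F(\chi_k)\ge(\tfrac12-\theta)F^\star$; i.e., the Oracle Mechanism has approximation ratio at least $\tfrac12-\theta$.
   Context: Sellers $S=\{1,\dots,n\}$ each own one indivisible item and have a cost $c_i\ge0$. The buyer's utility is a monotone submodular $F:2^S\to\mathbb R_{\ge0}$, budget $B>0$; $c(T)=\sum_{i\in T}c_i$. $F^\star=\max\{F(T):c(T)\le B\}>0$; the largeness ratio is $\theta=\max_{s}F(\{s\})/F^\star$. Greedy sequence $\chi(F)=\langle x_1,\dots,x_n\rangle$: with $\chi_0=\emptyset$, $\chi_i=\{x_1,\dots,x_i\}$, $x_i$ maximizes $(F(\chi_{i-1}\cup\{s\})-F(\chi_{i-1}))/c_s$ over $s\notin\chi_{i-1}$ (ratio $+\infty$ if $c_s=0$; ties arbitrary); $\partial_i=F(\chi_i)-F(\chi_{i-1})$. Oracle Mechanism (on the costs): compute $F^\star$, construct $\chi(F)$, let $k$ be the largest integer with $F(\chi_k)\le F^\star/2$, and declare $\chi_k$ the set of winners; each winner $x_j$ is paid $2r_{x_j}\partial_j$, where $r_s=B/F^\star_s$ and $F^\star_s$ is the optimum with seller $s$ removed. *)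

From HB Require Import structures.
From mathcomp Require Import all_boot all_order all_algebra.
From mathcomp Require Import constructive_ereal.
Set Implicit Arguments. Unset Strict Implicit. Unset Printing Implicit Defensive.
Import Order.TTheory GRing.Theory Num.Theory.
Local Open Scope ring_scope.

Section Defs.
Variables (R : realFieldType) (T : finType).

Definition cost (c : T -> R) (A : {set T}) : R := \sum_(i in A) c i.

Definition monotone_set_fun (F : {set T} -> R) : Prop :=
  forall A B : {set T}, A \subset B -> F A <= F B.

Definition submodular (F : {set T} -> R) : Prop :=
  forall A B : {set T}, F (A :|: B) + F (A :&: B) <= F A + F B.

(* F^* = max { F(A) : c(A) <= B }  (F >= 0, so max with 0 is harmless;
   the empty set is always feasible when B > 0) *)
Definition Fstar (F : {set T} -> R) (c : T -> R) (B : R) : R :=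
  \big[Num.max/0]_(A : {set T} | cost c A <= B) F A.

Definition largeness (F : {set T} -> R) (c : T -> R) (B : R) : R :=
  (\big[Num.max/0]_(s : T) F [set s]) / Fstar F c B.

Definition chi (xs : seq T) (i : nat) : {set T} := [set x in take i xs].

Definition gain_ratio (F : {set T} -> R) (c : T -> R) (P : {set T}) (s : T)
  : \bar R :=
  if c s == 0 then +oo%E else ((F (s |: P) - F P) / c s)%:E.

Definition greedy_seq (F : {set T} -> R) (c : T -> R) (xs : seq T) : Prop :=
  [/\ uniq xs, size xs = #|T| &
      forall (i : nat) (x0 : T), (i < #|T|)%N ->
        forall s : T, s \notin chi xs i ->
          (gain_ratio F c (chi xs i) s <= gain_ratio F c (chi xs i) (nth x0 xs i))%E].

Definition oracle_k (F : {set T} -> R) (c : T -> R) (B : R) (xs : seq T) (k : nat)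
  : Prop :=
  [/\ (k <= #|T|)%N, F (chi xs k) <= Fstar F c B / 2 &
      forall j : nat, (k < j <= #|T|)%N -> ~ (F (chi xs j) <= Fstar F c B / 2)].

End Defs.

From HB Require Import structures.
From mathcomp Require Import all_boot all_order all_algebra.
From mathcomp Require Import constructive_ereal.
From mathcomp Require Import ring lra.
Import Order.TTheory GRing.Theory Num.Theory.
Local Open Scope ring_scope.

Set Implicit Arguments.
Unset Strict Implicit.

(* As chi_(k+1) adds a single seller x to chi_k, submodularity bounds this by
   F(chi_k) + F({x}) <= F(chi_k) + theta F^*. *)

Section Chi.
Variable T : finType.

Lemma chiS (xs : seq T) (x0 : T) (i : nat) :
  (i < size xs)%N -> chi xs i.+1 = nth x0 xs i |: chi xs i.
Proof.
move=> lt_i; apply/setP => y.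
by rewrite /chi (take_nth x0 lt_i) !inE mem_rcons in_cons.
Qed.

Lemma chi_enum (xs : seq T) :
  uniq xs -> size xs = #|T| -> chi xs #|T| = setT.
Proof.
move=> uniq_xs size_xs; apply/eqP.
rewrite eqEcard subsetT cardsT /chi -size_xs take_size cardsE.
by rewrite (card_uniqP uniq_xs) leqnn.
Qed.

End Chi.

Section SetFunction.
Variables (R : realFieldType) (T : finType) (F : {set T} -> R).
Hypothesis F_ge0 : forall A, 0 <= F A.

Lemma submodular_setU1 (A : {set T}) (x : T) :
  submodular F -> F (x |: A) <= F A + F [set x].
Proof.
move=> subF; have := subF A [set x]; have := F_ge0 (A :&: [set x]).
by rewrite setUC; lra.
Qed.

Lemma Fstar_le_setT (c : T -> R) (B : R) :
  monotone_set_fun F -> Fstar F c B <= F setT.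
Proof. by move=> monF; apply: bigmax_le => // A _; apply/monF/subsetT. Qed.

Lemma singleton_le_largeness (c : T -> R) (B : R) (x : T) :
  0 < Fstar F c B -> F [set x] <= largeness F c B * Fstar F c B.
Proof.
move=> Fs_gt0; rewrite /largeness divfK ?gt_eqF //.
exact: (le_bigmax _ (fun s => F [set s])).
Qed.

Lemma oracle_k_lt_card (c : T -> R) (B : R) (xs : seq T) (k : nat) :
  monotone_set_fun F -> 0 < Fstar F c B -> uniq xs -> size xs = #|T| ->
  oracle_k F c B xs k -> (k < #|T|)%N.
Proof.
move=> monF Fs_gt0 uniq_xs size_xs [le_k Fk_le _].
rewrite ltn_neqAle le_k andbT; apply/eqP => k_eq.
move: Fk_le; rewrite k_eq chi_enum //.
have := Fstar_le_setT c B monF; lra.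
Qed.

End SetFunction.

Theorem lemma17 (R : realFieldType) (T : finType)
  (F : {set T} -> R) (c : T -> R) (B : R) (xs : seq T) (k : nat) :
  (forall i, 0 <= c i) ->
  0 < B ->
  (forall A, 0 <= F A) ->
  monotone_set_fun F ->
  submodular F ->
  0 < Fstar F c B ->
  greedy_seq F c xs ->
  oracle_k F c B xs k ->
  (1 / 2 - largeness F c B) * Fstar F c B <= F (chi xs k).
Proof.
move=> _ _ F_ge0 monF subF Fs_gt0 [uniq_xs size_xs _] oracle.
have lt_k := oracle_k_lt_card F_ge0 monF Fs_gt0 uniq_xs size_xs oracle.
have [_ _ k_max] := oracle.
have Fk1_gt : Fstar F c B / 2 < F (chi xs k.+1).
  by rewrite ltNge; apply/negP/k_max; rewrite ltnSn lt_k.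
have lt_k_size : (k < size xs)%N by rewrite size_xs.
have x0 : T by case: xs lt_k_size {uniq_xs size_xs oracle k_max Fk1_gt}.
set x := nth x0 xs k.
have Fk1_le : F (chi xs k.+1) <= F (chi xs k) + F [set x].
  by rewrite (chiS x0 lt_k_size); apply: submodular_setU1.
have := singleton_le_largeness x Fs_gt0.
lra.
Qed.
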